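(* Let $n\ge1$, let $a,b$ be positive integers, and let $G$ be a multigraph on $V=\{0,1,\ldots,n\}$ obtained from the complete multigraph $K_{n+1}^{a,b}$ by deleting some (possibly none) of the edges incident to the root $0$; i.e. $G$ has adjacency matrix $[a_{ij}]$ with $a_{0i}=a_{i0}=a_i$ for integers $0\le a_i\le a$ ($i\in[n]$), $a_{ij}=b$ for distinct $i,j\in[n]$, and $a_{ii}=0$. Then $$\dim_{\mathbb K}\left(R_n/\mathcal{M}_G^{(1)}\right)=\det\widetilde Q_G.$$
   Context: $\mathbb K$ is a field, $R_n=\mathbb K[x_1,\ldots,x_n]$. The complete multigraph $K_{n+1}^{a,b}$ on $V$ has $a$ edges between $0$ and each $i\in[n]$ and $b$ edges between each pair of distinct $i,j\in[n]$, no loops. For a loopless multigraph $G$ on $V$ with adjacency matrix $[a_{ij}]$ and $\emptyset\ne A\subseteq[n]$, put $d_A(i)=\sum_{j\in V\setminus A}a_{ij}$ for $i\in A$, $m_A=\prod_{i\in A}x_i^{d_A(i)}$, and $\mathcal{M}_G^{(1)}=\langle m_A:\emptyset\ne A\subseteq[n],\ |A|\le2\rangle$ (explicitly generated by $x_i^{d_i}$ and $x_i^{d_i-a_{ij}}x_j^{d_j-a_{ij}}$ for $i\ne j$ in $[n]$, where $d_i=\sum_{j\in V}a_{ij}$). The truncated signless Laplace matrix $\widetilde Q_G$ is the $n\times n$ matrix indexed by $[n]$ with diagonal entries $d_i$ and off-diagonal entries $a_{ij}$. *)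

From HB Require Import structures.
From mathcomp Require Import all_boot all_order all_algebra.
From mathcomp Require Import mpoly.
Set Implicit Arguments. Unset Strict Implicit. Unset Printing Implicit Defensive.
Import Order.TTheory GRing.Theory Num.Theory.
Local Open Scope ring_scope.

(* Vertices V = {0,...,n} are 'I_n.+1, root 0 = ord0; vertex i in [n]
   (i : 'I_n, 0-based in Rocq) is [vtx i] = lift ord0 i. Variable x_{i+1} is 'X_i. *)
Definition vtx (n : nat) (i : 'I_n) : 'I_n.+1 := lift ord0 i.

Definition G_adj (n : nat) (ai : 'I_n -> nat) (b : nat) (u v : 'I_n.+1) : nat :=
  if u == v then 0%N
  else match unlift ord0 u, unlift ord0 v with
       | None, Some j => ai j
       | Some i, None => ai i
       | Some _, Some _ => b
       | None, None => 0%N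
       end.

Definition dA (n : nat) (adj : 'I_n.+1 -> 'I_n.+1 -> nat) (A : {set 'I_n}) (i : 'I_n) : nat :=
  (\sum_(j : 'I_n.+1 | j \notin [set vtx k | k : 'I_n in A]) adj (vtx i) j)%N.

Definition mA (K : fieldType) (n : nat) (adj : 'I_n.+1 -> 'I_n.+1 -> nat)
  (A : {set 'I_n}) : {mpoly K[n]} :=
  \prod_(i in A) 'X_i ^+ dA adj A i.

Definition in_M1 (K : fieldType) (n : nat) (adj : 'I_n.+1 -> 'I_n.+1 -> nat)
  (p : {mpoly K[n]}) : Prop :=
  exists c : {set 'I_n} -> {mpoly K[n]},
    p = \sum_(A : {set 'I_n} | (A != set0) && (#|A| <= 2)%N) c A * mA K adj A.

(* dim_K (R_n / I) = d : there are d polynomials whose classes mod I form a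
   K-basis of R_n / I (spanning and linearly independent modulo I). *)
Definition quot_dim_eq (K : fieldType) (n : nat) (I : {mpoly K[n]} -> Prop) (d : nat) : Prop :=
  exists B : 'I_d -> {mpoly K[n]},
    (forall p : {mpoly K[n]}, exists c : 'I_d -> K, I (p - \sum_(k < d) c k *: B k))
    /\ (forall c : 'I_d -> K, I (\sum_(k < d) c k *: B k) -> forall k, c k = 0).

Definition deg (n : nat) (adj : 'I_n.+1 -> 'I_n.+1 -> nat) (i : 'I_n) : nat :=
  (\sum_(j : 'I_n.+1) adj (vtx i) j)%N.

Definition Qtilde (n : nat) (adj : 'I_n.+1 -> 'I_n.+1 -> nat) : 'M[int]_n :=
  \matrix_(i < n, j < n)
    (if i == j then (deg adj i)%:Z else (adj (vtx i) (vtx j))%:Z).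
Arguments mA K [n] adj A.
Arguments in_M1 K [n] adj p.
Arguments quot_dim_eq K [n] I d.

From HB Require Import structures.
From mathcomp Require Import all_boot all_order all_algebra.
From mathcomp Require Import mpoly.
From mathcomp Require Import ring.
Import Order.TTheory GRing.Theory Num.Theory.
Local Open Scope ring_scope.
Set Implicit Arguments. Unset Strict Implicit. Unset Printing Implicit Defensive.

(* 1. M_G^(1) is a monomial ideal, so a polynomial lies in it iff its
      coefficients vanish on the standard monomials (those divisible by no
      generator m_A), and the standard monomials form a K-basis of R_n / M.
   2. For G, writing D_i = d_i and E_i = d_i - b, the generator m_{i} is
      x_i^{D_i} and m_{i,j} = x_i^{E_i} x_j^{E_j}; hence u is standard iff
      u_i < D_i for all i and u_i >= E_i for at most one i.
   3. Splitting according to which coordinate (if any) reaches its threshold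
      E_i, there are  std_count E D = prod_i E_i + sum_i (D_i - E_i) prod_{j<>i} E_j
      standard monomials.
   4. Qtilde_G = diag(E) + b J, whose determinant is
      prod_i E_i + b sum_i prod_{j<>i} E_j, which is std_count E D since
      D_i - E_i = b (for n = 1 both sides are simply d_1). Step 1 is proved for an arbitrary
   adjacency matrix, step 3 for arbitrary bounds E <= D, and the determinant
   formula of step 4 over any commutative ring. *)

Lemma lift0_eq0 n (i : 'I_n) : (lift ord0 i == ord0) = false.
Proof. by rewrite eq_sym (negbTE (neq_lift _ _)). Qed.

Lemma ord0_eq_lift0 n (i : 'I_n) : (ord0 == lift ord0 i) = false.
Proof. by rewrite eq_sym lift0_eq0. Qed.

Definition box_mono (n N : nat) (f : {ffun 'I_n -> 'I_N}) : 'X_{1..n} :=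
  [multinom val (f i) | i < n].

Lemma box_mono_inj n N : injective (@box_mono n N).
Proof.
move=> f g /mnmP fg; apply/ffunP => i; apply: val_inj.
by have := fg i; rewrite !mnmE.
Qed.

Lemma mcoeff_sum_inj (K : fieldType) n d (c : 'I_d -> K) (s : 'I_d -> 'X_{1..n}) k0 :
  injective s -> (\sum_(k < d) c k *: 'X_[s k] : {mpoly K[n]})@_(s k0) = c k0.
Proof.
move=> s_inj; rewrite raddf_sum (bigD1 k0) //= mcoeffZ mcoeffX eqxx mulr1.
rewrite big1 ?addr0 // => k nk.
by rewrite mcoeffZ mcoeffX (inj_eq s_inj) (negbTE nk) mulr0.
Qed.

Lemma mcoeffMX_nle (K : fieldType) n (p : {mpoly K[n]}) e m :
  ~~ (e <= m)%MM -> (p * 'X_[e])@_m = 0.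
Proof.
move=> nle; apply/eqP; rewrite mcoeff_eq0; apply: contra nle.
by rewrite (perm_mem (msuppMX p e)) => /mapP [m' _ ->]; exact: lem_addr.
Qed.

Section StandardMonomials.
Variables (K : fieldType) (n : nat) (adj : 'I_n.+1 -> 'I_n.+1 -> nat).

Definition small_set (A : {set 'I_n}) : bool := (A != set0) && (#|A| <= 2)%N.

Definition gen_exp (A : {set 'I_n}) : 'X_{1..n} :=
  [multinom (if i \in A then dA adj A i else 0%N) | i < n].

Definition standard (m : 'X_{1..n}) : bool :=
  [forall A, small_set A ==> ~~ (gen_exp A <= m)%MM].

Lemma mA_gen_exp A : mA K adj A = 'X_[gen_exp A].
Proof.
rewrite mpolyXE_id /mA big_mkcond; apply: eq_bigr => i _.
by rewrite mnmE; case: (i \in A).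
Qed.

Lemma in_M1_0 : in_M1 K adj 0.
Proof. by exists (fun _ => 0); rewrite big1 // => A _; rewrite mul0r. Qed.

Lemma in_M1D p q : in_M1 K adj p -> in_M1 K adj q -> in_M1 K adj (p + q).
Proof.
move=> [c ->] [d ->]; exists (fun A => c A + d A).
by rewrite -big_split; apply: eq_bigr => A _; rewrite mulrDl.
Qed.

Lemma in_M1M q p : in_M1 K adj p -> in_M1 K adj (q * p).
Proof.
move=> [c ->]; exists (fun A => q * c A).
by rewrite mulr_sumr; apply: eq_bigr => A _; rewrite mulrA.
Qed.

Lemma in_M1_gen A : small_set A -> in_M1 K adj (mA K adj A).
Proof.
move=> sA; exists (fun B => (B == A)%:R).
rewrite (bigD1 A) //= eqxx mul1r big1 ?addr0 // => B /andP [_ nBA].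
by rewrite (negbTE nBA) mul0r.
Qed.

Lemma in_M1_nonstandard m : ~~ standard m -> in_M1 K adj 'X_[m].
Proof.
rewrite negb_forall => /existsP [A]; rewrite negb_imply negbK => /andP [sA le].
by rewrite -(submK le) mpolyXD -mA_gen_exp; apply: in_M1M; apply: in_M1_gen.
Qed.

Lemma in_M1P p : in_M1 K adj p <-> (forall m, standard m -> p@_m = 0).
Proof.
split=> [[c ->] m /forallP m_std | std0].
  rewrite raddf_sum big1 // => A sA; rewrite mA_gen_exp; apply: mcoeffMX_nle.
  exact: implyP (m_std A) sA.
rewrite (mpolyE p) big_seq.
apply: (big_ind (in_M1 K adj)); [exact: in_M1_0 | exact: in_M1D |] => m _.
have [m_std | m_nstd] := boolP (standard m); first by rewrite std0 // scale0r; exact: in_M1_0.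
by rewrite -mul_mpolyC; apply: in_M1M; apply: in_M1_nonstandard.
Qed.

Lemma quot_dim_standard N : (forall m, standard m -> forall i, (m i < N)%N) ->
  quot_dim_eq K (in_M1 K adj)
    #|[set f : {ffun 'I_n -> 'I_N} | standard (box_mono f)]|.
Proof.
move=> bounded; set S := [set f | _].
pose s (k : 'I_#|S|) := box_mono (enum_val k).
have s_inj : injective s by move=> k1 k2 /box_mono_inj /enum_val_inj.
have s_std k : standard (s k) by have := enum_valP k; rewrite inE.
have s_onto m : standard m -> exists k, s k = m.
  move=> m_std; pose f : {ffun 'I_n -> 'I_N} := [ffun i => Ordinal (bounded m m_std i)].
  have fm : box_mono f = m by apply/mnmP => i; rewrite mnmE ffunE.
  have fS : f \in S by rewrite inE fm.
  by exists (enum_rank_in fS f); rewrite /s enum_rankK_in.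
exists (fun k => 'X_[s k]); split=> [p | c c_in k].
  exists (fun k => p@_(s k)); apply/in_M1P => m /s_onto [k <-].
  by rewrite mcoeffB mcoeff_sum_inj // subrr.
by have /in_M1P/(_ _ (s_std k)) := c_in; rewrite mcoeff_sum_inj.
Qed.

End StandardMonomials.

Lemma dA_sub n (adj : 'I_n.+1 -> 'I_n.+1 -> nat) A i :
  dA adj A i = (deg adj i - \sum_(k in A) adj (vtx i) (vtx k))%N.
Proof.
rewrite /deg (bigID (fun j => j \in [set vtx k | k : 'I_n in A])) /=.
by rewrite big_imset /= ?addKn // => x y _ _; apply: lift_inj.
Qed.

Lemma small_setP n (A : {set 'I_n}) : small_set A ->
  (exists i, A = [set i]) \/ (exists i j, i != j /\ A = [set i; j]).
Proof.
case/andP => nA le2; have : #|A| != 0%N by rewrite cards_eq0.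
move: le2; rewrite leq_eqVlt ltnS leq_eqVlt ltnS leqn0 => /or3P [] h.
- by right; apply/cards2P.
- by left; apply/cards1P.
- by rewrite h.
Qed.

Definition box_standard n (D E u : 'I_n -> nat) : bool :=
  [forall i, u i < D i]%N &&
  [forall i, forall j, (i != j) ==> ~~ ((E i <= u i) && (E j <= u j))%N].

Lemma eq_box_standard n (D E u v : 'I_n -> nat) :
  u =1 v -> box_standard D E u = box_standard D E v.
Proof.
move=> uv; congr andb; apply: eq_forallb => i; rewrite uv //.
by apply: eq_forallb => j; rewrite !uv.
Qed.

Section Graph.
Variables (n : nat) (ai : 'I_n -> nat) (b : nat).
Local Notation adj := (G_adj ai b).

Lemma G_vv i j : adj (vtx i) (vtx j) = if i == j then 0%N else b.
Proof. by rewrite /G_adj /vtx (inj_eq lift_inj) !liftK; case: eqP. Qed.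

Lemma G_v0 i : adj (vtx i) ord0 = ai i.
Proof. by rewrite /G_adj /vtx lift0_eq0 liftK unlift_none. Qed.

Lemma deg_G i : deg adj i = (ai i + n.-1 * b)%N.
Proof.
rewrite /deg big_ord_recl G_v0; congr (_ + _)%N.
rewrite (eq_bigr (fun k => if i == k then 0%N else b)) => [|k _]; last exact: G_vv.
rewrite (bigD1 i) //= eqxx add0n (eq_bigr (fun _ => b)) => [|k nk]; last first.
  by rewrite eq_sym (negbTE nk).
by rewrite sum_nat_const cardC1 card_ord.
Qed.

Lemma gen_exp1 i m : (gen_exp adj [set i] <= m)%MM = (deg adj i <= m i)%N.
Proof.
have dAi : dA adj [set i] i = deg adj i by rewrite dA_sub big_set1 G_vv eqxx subn0.
apply/mnm_lepP/idP => [/(_ i) | le k]; first by rewrite mnmE set11 dAi.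
by rewrite mnmE in_set1; case: eqP => [->|//]; rewrite dAi.
Qed.

Lemma gen_exp2 i j m : i != j ->
  (gen_exp adj [set i; j] <= m)%MM = ((deg adj i - b <= m i) && (deg adj j - b <= m j))%N.
Proof.
move=> nij.
have dAij k : k \in [set i; j] -> dA adj [set i; j] k = (deg adj k - b)%N.
  rewrite dA_sub big_setU1 ?in_set1 //= big_set1 !G_vv !inE => /orP [] /eqP ->.
    by rewrite eqxx (negbTE nij).
  by rewrite eqxx eq_sym (negbTE nij) addn0.
have iin : i \in [set i; j] by rewrite !inE eqxx.
have jin : j \in [set i; j] by rewrite !inE eqxx orbT.
apply/mnm_lepP/idP => [le | /andP [le_i le_j] k].
  by have := le i; have := le j; rewrite !mnmE iin jin !dAij // => -> ->.
rewrite mnmE; case: ifP => // kin; rewrite dAij //.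
by move: kin; rewrite !inE => /orP [] /eqP ->.
Qed.

Lemma standard_G m :
  standard adj m = box_standard (deg adj) (fun i => deg adj i - b)%N (fun i => m i).
Proof.
apply/forallP/andP => [m_std | [/forallP ltD /forallP pair_free] A].
  split; apply/forallP => i.
    have small_i : small_set [set i] by rewrite /small_set -cards_eq0 cards1.
    by have := implyP (m_std _) small_i; rewrite gen_exp1 ltnNge.
  apply/forallP => j; apply/implyP => nij.
  have small_ij : small_set [set i; j] by rewrite /small_set -cards_eq0 cards2 nij.
  by have := implyP (m_std _) small_ij; rewrite gen_exp2.
apply/implyP => /small_setP [[i ->] | [i [j [nij ->]]]].
  by rewrite gen_exp1 -ltnNge.
by rewrite gen_exp2 //; have /forallP/(_ j) := pair_free i; rewrite nij.
Qed.

End Graph.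

(* The number of standard exponents: none of them, or exactly the i-th, reaches
   its threshold. *)
Definition std_count n (E D : 'I_n -> nat) : nat :=
  (\prod_i E i + \sum_i (D i - E i) * \prod_(j | j != i) E j)%N.

Section Counting.
Local Open Scope nat_scope.

Lemma card_window N lo hi : lo <= hi -> hi <= N ->
  #|[pred k : 'I_N | lo <= k < hi]| = hi - lo.
Proof.
move=> lo_hi hi_N.
rewrite -[hi - lo]muln1 -sum_nat_const_nat big_geq_mkord.
rewrite (big_ord_widen_cond N (fun i => true && (lo <= i)) (fun _ => 1)) //.
by rewrite sum1_card; apply: eq_card => k; rewrite !inE.
Qed.

Lemma card_sum_indicator (T : finType) (A : pred T) : #|A| = \sum_x nat_of_bool (A x).
Proof.
rewrite -sum1_card big_mkcond; apply: eq_bigr => x _.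
by rewrite -topredE /=; case: (A x).
Qed.

Lemma sum_box_indicator n N (F : 'I_n -> pred 'I_N) :
  \sum_(f : {ffun 'I_n -> 'I_N}) [forall i, f i \in F i] = \prod_i #|F i|.
Proof.
rewrite -(card_sum_indicator [pred f : {ffun 'I_n -> 'I_N} | [forall i, f i \in F i]]).
rewrite -(eq_card (A := family F)) => [|f]; last exact/familyP/forallP.
by rewrite card_family /= /image_mem foldrE big_map big_enum.
Qed.

Lemma box_standard_split n (E D u : 'I_n -> nat) : (forall i, E i <= D i) ->
  box_standard D E u = [forall i, u i < E i] +
    \sum_i [forall j, if j == i then E i <= u j < D i else u j < E j] :> nat.
Proof.
move=> E_le_D; have [below | /forallPn [i0]] := boolP [forall i, u i < E i].
  rewrite big1 ?addn0 => [|i _]; last first.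
    apply/eqP; rewrite eqb0; apply/forallPn; exists i.
    by rewrite eqxx leqNgt (forallP below i).
  congr nat_of_bool; apply/andP; split; apply/forallP => i.
    exact: leq_trans (forallP below i) (E_le_D i).
  by apply/forallP => j; apply/implyP => _; rewrite leqNgt (forallP below i).
rewrite -leqNgt => above0; rewrite (bigD1 i0) //= big1 ?addn0 => [|i ni]; last first.
  apply/eqP; rewrite eqb0; apply/forallPn; exists i0.
  by rewrite eq_sym (negbTE ni) ltnNge above0.
congr nat_of_bool; apply/andP/forallP => [[/forallP ltD /forallP pair_free] j | only_i0].
  case: eqP => [->|/eqP nj]; first by rewrite above0 ltD.
  rewrite ltnNge; apply/negP => above_j.
  by have /forallP/(_ j) := pair_free i0; rewrite eq_sym nj above0 above_j.
split; apply/forallP => i.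
  by have := only_i0 i; case: eqP => [-> /andP [] //|_]; move/leq_trans; apply.
apply/forallP => j; apply/implyP => nij.
have [ei|ni] := eqVneq i i0.
  have := only_i0 j; rewrite -ei eq_sym (negbTE nij) => lt_j.
  by rewrite [E j <= _]leqNgt lt_j andbF.
by have := only_i0 i; rewrite (negbTE ni) => lt_i; rewrite leqNgt lt_i.
Qed.

Lemma count_box_standard n N (E D : 'I_n -> nat) :
  (forall i, E i <= D i) -> (forall i, D i <= N) ->
  #|[pred f : {ffun 'I_n -> 'I_N} | box_standard D E (fun i => f i)]| = std_count E D.
Proof.
move=> E_le_D D_le_N.
have below i : #|[pred k : 'I_N | k < E i]| = E i.
  rewrite -[E i in RHS]subn0 -(card_window (leq0n (E i)) (leq_trans (E_le_D i) (D_le_N i))).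
  by apply: eq_card => k; rewrite !inE.
rewrite card_sum_indicator.
under eq_bigr do rewrite /= (box_standard_split _ E_le_D).
rewrite big_split /= exchange_big /=; congr (_ + _).
  rewrite (sum_box_indicator (fun i => [pred k : 'I_N | k < E i])).
  by apply: eq_bigr => i _; apply: below.
apply: eq_bigr => i _.
rewrite (sum_box_indicator
  (fun j => [pred k : 'I_N | if j == i then E i <= k < D i else k < E j])).
rewrite (bigD1 i) //=; congr (_ * _).
  rewrite -(card_window (N := N) (E_le_D i) (D_le_N i)).
  by apply: eq_card => k; rewrite !inE eqxx.
by apply: eq_bigr => j nj; rewrite -[RHS]below; apply: eq_card => k; rewrite !inE (negbTE nj).
Qed.

End Counting.

Section Determinant.
Variable R : comPzRingType.

Lemma prod_neq_lift0 n (c : 'I_n.+1 -> R) (i : 'I_n) :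
  \prod_(j < n.+1 | j != lift ord0 i) c j = c ord0 * \prod_(j < n | j != i) c (lift ord0 j).
Proof.
rewrite big_mkcond big_ord_recl /=.
by congr (_ * _); rewrite [RHS]big_mkcond; apply: eq_bigr => j _; rewrite (inj_eq lift_inj).
Qed.

Lemma prod_neq_ord0 n (c : 'I_n.+1 -> R) :
  \prod_(j < n.+1 | j != ord0) c j = \prod_(j < n) c (lift ord0 j).
Proof. by rewrite big_mkcond big_ord_recl /= mul1r. Qed.

(* Replacing the first row of diag(c) + b J by (1, ..., 1) gives determinant
   c_1 ... c_n: it factors as L U with L unitriangular (subtracting b times
   the first row) and U upper triangular with diagonal 1, c_1, ..., c_n. *)
Lemma det_ones_row0 n (c : 'I_n.+1 -> R) (b : R) :
  \det (\matrix_(i, j) (if i == ord0 then 1 else c i * (i == j)%:R + b) : 'M[R]_n.+1)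
  = \prod_(j < n) c (lift ord0 j).
Proof.
pose L : 'M[R]_n.+1 :=
  \matrix_(i, j) (if j == ord0 then (if i == ord0 then 1 else b) else (i == j)%:R).
pose U : 'M[R]_n.+1 := \matrix_(i, j) (if i == ord0 then 1 else c i * (i == j)%:R).
have -> : \matrix_(i, j) (if i == ord0 then 1 else c i * (i == j)%:R + b) = L *m U.
  apply/matrixP => i j; rewrite !mxE big_ord_recl !mxE eqxx mulr1.
  under eq_bigr => k _ do rewrite !mxE !lift0_eq0.
  case: (unliftP ord0 i) => [i'|] ->; last first.
    by rewrite eqxx big1 ?addr0 // => k _; rewrite ord0_eq_lift0 mul0r.
  rewrite lift0_eq0 (bigD1 i') //= eqxx mul1r big1 ?addr0 ?[_ + b]addrC //.
  by move=> k nk; rewrite (inj_eq lift_inj) eq_sym (negbTE nk) mul0r.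
have det_L : \det L = 1.
  rewrite det_trig; last first.
    apply/forallP => i; apply/forallP => j; apply/implyP => lt_ij; rewrite mxE.
    have [j0|_] := eqVneq j ord0; first by rewrite j0 in lt_ij.
    by rewrite -val_eqE /= (ltn_eqF lt_ij).
  by rewrite big1 // => i _; rewrite mxE eqxx; case: eqP.
rewrite det_mulmx det_L mul1r -det_tr det_trig; last first.
  apply/forallP => i; apply/forallP => j; apply/implyP => lt_ij.
  rewrite !mxE; have [j0|_] := eqVneq j ord0; first by rewrite j0 in lt_ij.
  by rewrite -val_eqE /= (gtn_eqF lt_ij) mulr0.
rewrite big_ord_recl !mxE eqxx mul1r; apply: eq_bigr => i _.
by rewrite !mxE lift0_eq0 eqxx mulr1.
Qed.

(* det(diag(c) + b J) = prod_i c_i + b sum_i prod_{j <> i} c_j, by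
   multilinearity in the first row and induction on the size. *)
Lemma det_diag_add_const n (c : 'I_n -> R) (b : R) :
  \det (\matrix_(i, j) (c i * (i == j)%:R + b) : 'M[R]_n) =
  \prod_i c i + b * \sum_i \prod_(j | j != i) c j.
Proof.
elim: n c => [|n IH] c; first by rewrite det_mx00 !big_ord0 mulr0 addr0.
set M := \matrix_(i, j) _.
pose B : 'M[R]_n.+1 := \matrix_(i, j) (if i == ord0 then (i == j)%:R else M i j).
pose C : 'M[R]_n.+1 := \matrix_(i, j) (if i == ord0 then 1 else M i j).
have -> : \det M = c ord0 * \det B + b * \det C.
  apply: (determinant_multilinear (i0 := ord0)).
  - by apply/rowP => j; rewrite !mxE eqxx mulr1.
  - by apply/matrixP => i j; rewrite !mxE lift0_eq0.
  - by apply/matrixP => i j; rewrite !mxE lift0_eq0.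
have -> : \det B = \det (\matrix_(i, j) (c (lift ord0 i) * (i == j)%:R + b) : 'M[R]_n).
  rewrite (expand_det_row B ord0) big_ord_recl big1 => [|j _]; last first.
    by rewrite !mxE eqxx ord0_eq_lift0 mul0r.
  rewrite !mxE eqxx mul1r /cofactor addn0 expr0 mul1r addr0.
  by congr (\det _); apply/matrixP => i j; rewrite !mxE lift0_eq0 (inj_eq lift_inj).
have -> : \det C = \prod_(j < n) c (lift ord0 j).
  by rewrite -(det_ones_row0 c b); congr (\det _); apply/matrixP => i j; rewrite !mxE.
rewrite IH big_ord_recl [\sum_(i < n.+1) _]big_ord_recl.
rewrite prod_neq_ord0; under [X in _ = _ + b * (_ + X)]eq_bigr do rewrite prod_neq_lift0.
by rewrite -mulr_sumr; ring.
Qed.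

End Determinant.

(* The determinant of Qtilde_G, in the form of the count of standard monomials. *)
Lemma det_Qtilde_G n (ai : 'I_n -> nat) (b : nat) : (1 <= n)%N ->
  let D := deg (G_adj ai b) in
  \det (Qtilde (G_adj ai b)) = (std_count (fun i => D i - b)%N D)%:Z.
Proof.
move=> n_gt0 D; set E := fun i => (D i - b)%N.
have [n_le1 | n_ge2] := leqP n 1.
  have n1 : n = 1%N by apply/anti_leq/andP.
  subst n; rewrite det_mx11 /Qtilde mxE eqxx /std_count !big_ord1.
  by rewrite big_pred0 ?muln1 ?subnKC ?leq_subr // => j; rewrite (ord1 j).
have b_le_D i : (b <= D i)%N.
  rewrite /D deg_G; apply: leq_trans (leq_addl _ _).
  by rewrite leq_pmull // -ltnS prednK // ltnW.
have -> : Qtilde (G_adj ai b) = \matrix_(i, j) ((E i)%:Z * (i == j)%:R + b%:Z).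
  apply/matrixP => i j; rewrite !mxE; case: eqP => [->|/eqP nij].
    by rewrite mulr1 -PoszD subnK.
  by rewrite G_vv (negbTE nij) mulr0 add0r.
rewrite det_diag_add_const /std_count -[RHS]natz natrD natr_prod natr_sum mulr_sumr.
congr (_ + _); apply: eq_bigr => i _; first by rewrite natz.
rewrite natrM natr_prod {1}/E subKn // natz; congr (_ * _).
by apply: eq_bigr => j _; rewrite natz.
Qed.

Unset Implicit Arguments.
Theorem theorem1 (K : fieldType) (n : nat) (hn : (1 <= n)%N) (a b : nat)
  (ha : (0 < a)%N) (hb : (0 < b)%N) (ai : 'I_n -> nat)
  (hai : forall i, (ai i <= a)%N) :
  exists d : nat,
    quot_dim_eq K (in_M1 K (G_adj ai b)) d /\
    (d%:Z = \det (Qtilde (G_adj ai b))).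
Proof.
set adj := G_adj ai b; pose D := deg adj; pose E i := (D i - b)%N.
exists (std_count E D); split; last by rewrite det_Qtilde_G.
pose N := (\sum_j D j)%N.
have D_le_N i : (D i <= N)%N by rewrite /N (bigD1 i) //= leq_addr.
have <- : #|[set f : {ffun 'I_n -> 'I_N} | standard adj (box_mono f)]| = std_count E D.
  rewrite -(count_box_standard (fun i => leq_subr b (D i)) D_le_N).
  by apply: eq_card => f; rewrite !inE standard_G; apply: eq_box_standard => i; rewrite mnmE.
apply: quot_dim_standard => m; rewrite standard_G => /andP [/forallP lt_D _] i.
exact: leq_trans (lt_D i) (D_le_N i).
Qed.
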